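(* Let $b(n)$ be the number of non-squashing partitions of $n$ into distinct parts. Then $b(0)=b(1)=1$, and for $m\ge1$, $b(2m)=b(2m-1)+b(m)-1$ and $b(2m+1)=b(2m)+1$. The generating function $B(x)=\sum_{n\ge0} b(n)x^n$ satisfies $$B(x)=\frac{1}{1-x}B(x^2)-\frac{x^2}{1-x^2},$$ and explicitly $$B(x)=1+\frac{x}{1-x}+\sum_{i=1}^{\infty}\frac{x^{3\cdot 2^{i-1}}}{\prod_{j=0}^{i}\left(1-x^{2^j}\right)}.$$
   Context: A partition $n=p_1+\cdots+p_k$ with $1\le p_1\le\cdots\le p_k$ is non-squashing if $p_1+\cdots+p_j\le p_{j+1}$ for all $1\le j\le k-1$. The empty partition of $0$ counts as a non-squashing partition into distinct parts. *)

From Stdlib Require Import Reals.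
From Coquelicot Require Import Coquelicot.
From mathcomp Require Import all_boot.

Set Implicit Arguments.
Unset Strict Implicit.
Unset Printing Implicit Defensive.

(* Non-squashing condition for a sequence p_1 <= ... <= p_k (0-indexed list):
   p_1 + ... + p_j <= p_{j+1} for all 1 <= j <= k-1. *)
Definition nonsquashing (s : seq nat) : bool :=
  all (fun j => (sumn (take j.+1 s) <= nth 0 s j.+1)%N) (iota 0 (size s).-1).

(* A partition of n into distinct parts is a finite set A of positive
   integers (all <= n) with sum n; its parts in nondecreasing order: *)
Definition parts (n : nat) (A : {set 'I_n.+1}) : seq nat :=
  sort leq [seq val i | i <- enum A].

Definition is_nsd_partition (n : nat) (A : {set 'I_n.+1}) : bool :=
  [&& (ord0 \notin A), (\sum_(i in A) val i == n)%N & nonsquashing (parts A)].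

(* b(n) = number of non-squashing partitions of n into distinct parts
   (the empty partition of 0 counts, as A = set0). *)
Definition b (n : nat) : nat := #|[set A : {set 'I_n.+1} | is_nsd_partition A]|.

Local Open Scope R_scope.

Definition bterm (x : R) (n : nat) : R := INR (b n) * x ^ n.
Definition B (x : R) : R := Series (bterm x).

Definition prodB (x : R) (i : nat) : R :=
  foldr Rmult 1 [seq 1 - x ^ (2 ^ j)%N | j <- iota 0 i.+1].

From Stdlib Require Import Reals Lra Lia Psatz.
From Coquelicot Require Import Coquelicot.
From mathcomp Require Import all_boot zify.

(* Removing the largest part m of a non-squashing partition of n > 0 into
   distinct parts leaves such a partition of r = n - m with 2r <= n;
   conversely such a partition of r extends by the part n - r unless it
   already contains it, which happens only for the partition {r} when n = 2r.
   Hence b n + [n even] = b 0 + ... + b (n/2), which yields the recurrences,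
   the monotonicity of b and b n <= (n/2 + 1) b (n/2); so b grows
   subexponentially and B converges on |x| < 1.
   For E(x) = B(x) - 1/(1-x) = sum (b n - 1) x^n the recurrences say that the
   even and odd parts of (1-x) E(x) are E(x^2) and x^3/(1-x^2), i.e.
   E(x) = E(x^2)/(1-x) + x^3/((1-x)(1-x^2)).  Iterating N times leaves the
   remainder E(x^(2^(N+1))) / prod_(j<=N) (1 - x^(2^j)), which is
   O(|x|^(2^(N+1)) / (1-|x|)^(N+1)) and tends to 0. *)

Set Implicit Arguments.
Unset Strict Implicit.
Local Open Scope nat_scope.

Lemma nonsquashing_rcons s m :
  nonsquashing (rcons s m) = nonsquashing s && (sumn s <= m).
Proof.
case: s => [|y s] //; rewrite /nonsquashing size_rcons.
have -> : iota 0 (size (y :: s)).+1.-1 = rcons (iota 0 (size s)) (size s).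
  by rewrite -cats1 -addn1 iotaD.
rewrite all_rcons andbC; congr (_ && _).
  apply: eq_in_all => j; rewrite mem_iota add0n => /andP [_ hj].
  rewrite -cats1 takel_cat; last by rewrite /= ltnW.
  by rewrite nth_cat /= ltnS hj.
by rewrite -cats1 take_cat nth_cat /= !ltnn subnn take0 cats0.
Qed.

Lemma mem_leq_sumn s x : x \in s -> x <= sumn s.
Proof.
elim: s => //= y s IH; rewrite in_cons => /predU1P [-> | /IH h].
  exact: leq_addr.
exact: leq_trans h (leq_addl _ _).
Qed.

Lemma sumn_eq0_nil s : 0 \notin s -> sumn s = 0 -> s = [::].
Proof.
case: s => //= x s; rewrite in_cons negb_or => /andP [hx _] /eqP.
by rewrite addn_eq0 eq_sym (negbTE hx).
Qed.

Lemma sumn_mem_seq1 s r : 0 \notin s -> sumn s = r -> r \in s -> s = [:: r].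
Proof.
move=> s0 sum_s r_in; move: s0 sum_s; case/splitPr: r_in => s1 s2.
rewrite mem_cat in_cons !negb_or sumn_cat /= => /and3P [h1 _ h2] sum_s.
have e1 : sumn s1 = 0 by lia.
have e2 : sumn s2 = 0 by lia.
by rewrite (sumn_eq0_nil h1 e1) (sumn_eq0_nil h2 e2).
Qed.

Lemma sorted_ltn_rcons s m :
  sorted ltn (rcons s m) = sorted ltn s && all (fun x => x < m) s.
Proof.
elim: s => [|y s IH] //=.
rewrite !(path_sortedE ltn_trans) IH all_rcons.
by case: (y < m); case: (all (ltn y) s); case: (sorted ltn s); case: (all _ s).
Qed.

Section Parts.

Variable n : nat.
Implicit Type A : {set 'I_n.+1}.

Lemma sorted_parts A : sorted ltn (parts A).
Proof.
rewrite ltn_sorted_uniq_leq sort_uniq (sort_sorted leq_total) andbT.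
by rewrite map_inj_uniq ?enum_uniq //; exact: val_inj.
Qed.

Lemma mem_parts A (i : 'I_n.+1) : (val i \in parts A) = (i \in A).
Proof. by rewrite /parts mem_sort mem_map ?mem_enum //; exact: val_inj. Qed.

Lemma parts_inj : injective (@parts n).
Proof. by move=> A1 A2 eq12; apply/setP => i; rewrite -!mem_parts eq12. Qed.

Lemma sum_parts A : \sum_(i in A) val i = sumn (parts A).
Proof. by rewrite /parts (perm_sumn (permEl (perm_sort _ _))) sumnE big_map big_enum. Qed.

Definition set_of_seq (s : seq nat) : {set 'I_n.+1} := [set i | val i \in s].

Lemma parts_set_of_seq s :
  sorted ltn s -> all (fun x => x < n.+1) s -> parts (set_of_seq s) = s.
Proof.
move=> s_sorted s_lt; apply: (irr_sorted_eq ltn_trans ltnn) => // [|x].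
  exact: sorted_parts.
have [x_lt | x_ge] := ltnP x n.+1.
  by rewrite -[x]/(val (Ordinal x_lt)) mem_parts inE.
have x_notin_s : x \notin s by apply: contraTN x_ge => /(allP s_lt); rewrite ltnNge.
rewrite (negbTE x_notin_s); apply/negbTE; apply: contraTN x_ge.
by rewrite /parts mem_sort => /mapP [i _ ->]; rewrite -leqNgt -ltnS ltn_ord.
Qed.

Lemma set_of_seq_parts A : set_of_seq (parts A) = A.
Proof. by apply/setP => i; rewrite inE mem_parts. Qed.

End Parts.

Definition nsd_seq n s := [&& 0 \notin s, sumn s == n & nonsquashing s].

Lemma nsd_partitionE n (A : {set 'I_n.+1}) : is_nsd_partition A = nsd_seq n (parts A).
Proof. by rewrite /is_nsd_partition /nsd_seq -(mem_parts A ord0) sum_parts. Qed.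

Lemma nsd_seq_rcons n s m : nsd_seq n (rcons s m) =
  [&& 0 < m, m <= n, nsd_seq (n - m) s & sumn s <= m].
Proof.
rewrite /nsd_seq nonsquashing_rcons mem_rcons in_cons negb_or sumn_rcons.
apply/and4P/and4P => [[/andP [m0 s0] /eqP sum_s ns sm] | [m0 mn /and3P [s0 /eqP sum_s ns] sm]].
  by split=> //; [lia | lia | apply/and3P; split=> //; apply/eqP; lia].
by split=> //; [apply/andP; split=> //; lia | apply/eqP; lia].
Qed.

Definition nsd_set n := [set A : {set 'I_n.+1} | is_nsd_partition A].

Definition sum_but_largest n (A : {set 'I_n.+1}) := n - last 0 (parts A).

Definition append_part n r (A : {set 'I_r.+1}) : {set 'I_n.+1} :=
  set_of_seq n (rcons (parts A) (n - r)).

Definition nsd_avoiding n r :=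
  [set A : {set 'I_r.+1} | is_nsd_partition A && (n - r \notin parts A)].

Lemma nsd_set_parts n (A : {set 'I_n.+1}) :
  (A \in nsd_set n) = nsd_seq n (parts A).
Proof. by rewrite inE nsd_partitionE. Qed.

Lemma sum_but_largest_le n (A : {set 'I_n.+1}) :
  0 < n -> A \in nsd_set n -> (sum_but_largest A).*2 <= n.
Proof.
rewrite nsd_set_parts /sum_but_largest => n_gt0.
case/lastP: (parts A) => [/and3P [_ /eqP /= n0 _] | s m]; first lia.
by rewrite nsd_seq_rcons last_rcons => /and4P [_ mn /and3P [_ /eqP sum_s _] sm]; lia.
Qed.

Lemma nsd_avoiding_lt n r (A : {set 'I_r.+1}) :
  r.*2 <= n -> A \in nsd_avoiding n r -> all (fun x => x < n - r) (parts A).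
Proof.
rewrite inE nsd_partitionE => r_le /andP [/and3P [_ /eqP sum_A _] nr_notin].
apply/allP => x x_in; have := mem_leq_sumn x_in; rewrite sum_A => x_le.
by rewrite ltn_neqAle (contraNneq _ nr_notin) => [|<-] //; lia.
Qed.

Lemma parts_append_part n r (A : {set 'I_r.+1}) : r.*2 <= n ->
  A \in nsd_avoiding n r -> parts (append_part n A) = rcons (parts A) (n - r).
Proof.
move=> r_le A_in; have A_lt := nsd_avoiding_lt r_le A_in.
apply: parts_set_of_seq; first by rewrite sorted_ltn_rcons sorted_parts A_lt.
rewrite all_rcons ltnS leq_subr; apply: sub_all A_lt => x; lia.
Qed.

Lemma append_part_inj n r : r.*2 <= n -> {in nsd_avoiding n r &, injective (@append_part n r)}.
Proof.
move=> r_le A1 A2 A1_in A2_in eq12; apply: parts_inj; apply: (@rcons_injl _ (n - r)).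
by rewrite -(parts_append_part r_le A1_in) -(parts_append_part r_le A2_in) eq12.
Qed.

Lemma nsd_set_sum_but_largest n r : 0 < n -> r.*2 <= n ->
  [set A in nsd_set n | sum_but_largest A == r] = @append_part n r @: nsd_avoiding n r.
Proof.
move=> n_gt0 r_le; apply/setP => A; apply/idP/imsetP => [|[A' A'_in ->]].
  rewrite inE nsd_set_parts /sum_but_largest.
  have := sorted_parts A; have := set_of_seq_parts A.
  case/lastP: (parts A) => [_ _ /andP [/and3P [_ /eqP /= n0 _] _] | s m A_eq]; first lia.
  rewrite sorted_ltn_rcons last_rcons nsd_seq_rcons => /andP [s_sorted s_lt].
  case/andP => /and4P [_ mn /and3P [s0 /eqP sum_s ns] sm] /eqP r_eq.
  have m_eq : m = n - r by lia.
  have s_le : all (fun x => x < r.+1) s by apply/allP => x /mem_leq_sumn; lia.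
  exists (set_of_seq r s); last by rewrite /append_part parts_set_of_seq // -m_eq.
  rewrite inE nsd_partitionE parts_set_of_seq // /nsd_seq s0 ns -m_eq /=.
  have m_notin : m \notin s by apply/negP => /(allP s_lt); rewrite ltnn.
  by rewrite m_notin andbT; apply/eqP; lia.
move: (A'_in); rewrite [A' \in _]inE nsd_partitionE => /andP [A'_nsd _].
have := A'_nsd => /and3P [_ /eqP sum_A' _].
rewrite inE nsd_set_parts /sum_but_largest parts_append_part // last_rcons.
rewrite nsd_seq_rcons subKn ?A'_nsd ?sum_A' ?eqxx ?andbT; lia.
Qed.

Lemma card_nsd_avoiding n r : 0 < n -> r.*2 <= n ->
  #|nsd_avoiding n r| + (n == r.*2) = b r.
Proof.
move=> n_gt0 r_le.
pose C := [set A : {set 'I_r.+1} | n - r \in parts A].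
have -> : nsd_avoiding n r = nsd_set r :\: C by apply/setP => A; rewrite !inE andbC.
rewrite /b -/(nsd_set r) -(cardsID C (nsd_set r)) addnC; congr (_ + _).
(* A partition of r with a part n - r >= r can only be {r}, and then n = 2r. *)
have [n_eq | n_neq] := eqVneq n r.*2.
  have -> : nsd_set r :&: C = [set set_of_seq r [:: r]].
    apply/setP => A; rewrite !inE nsd_partitionE (_ : n - r = r); last by lia.
    apply/andP/eqP => [[/and3P [A0 /eqP sum_A _] r_in] | ->].
      by rewrite -(set_of_seq_parts A) (sumn_mem_seq1 A0 sum_A r_in).
    rewrite parts_set_of_seq //= ?ltnSn //; split; last exact: mem_head.
    by rewrite /nsd_seq /= addn0 eqxx mem_seq1 andbT; lia.
  by rewrite cards1.
rewrite (_ : nsd_set r :&: C = set0) ?cards0 //.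
apply/setP => A; rewrite !inE nsd_partitionE.
apply/negP => /andP [/and3P [_ /eqP sum_A _] nr_in].
by have := mem_leq_sumn nr_in; move/eqP: n_neq; lia.
Qed.

Lemma b_rec n : 0 < n -> b n + ~~ odd n = \sum_(r < n./2.+1) b r.
Proof.
move=> n_gt0.
have r_le (r : 'I_n./2.+1) : r.*2 <= n by rewrite -geq_half_double -ltnS.
have -> : b n = \sum_(A in nsd_set n) 1 by rewrite sum1_card.
rewrite (partition_big (fun A => inord (sum_but_largest A) : 'I_n./2.+1) xpredT) //=.
rewrite [RHS](eq_bigr (fun r : 'I_n./2.+1 => #|nsd_avoiding n r| + (n == (val r).*2))); last first.
  by move=> r _; rewrite card_nsd_avoiding.
rewrite big_split /=; congr (_ + _).
  apply: eq_bigr => r _; rewrite sum1_card -(card_in_imset (append_part_inj (r_le r))).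
  rewrite -nsd_set_sum_but_largest //; apply: eq_card => A; rewrite -topredE /= !inE.
  case A_nsd: (is_nsd_partition A) => //=.
  have : sum_but_largest A < n./2.+1.
    by rewrite ltnS geq_half_double sum_but_largest_le ?inE.
  by move=> lt_half; rewrite -val_eqE /= inordK.
rewrite big_ord_recr /= big1 => [|r _]; last first.
  by apply/eqP; rewrite eqb0; apply/eqP; have := ltn_ord r; rewrite geq_half_double; lia.
rewrite add0n; have := odd_double_half n.
by case: (odd n) => /= n_eq; case: eqP; lia.
Qed.

Lemma b0 : b 0 = 1.
Proof.
rewrite /b -/(nsd_set 0) (_ : nsd_set 0 = [set set_of_seq 0 [::]]) ?cards1 //.
apply/setP => A; rewrite !inE nsd_partitionE; apply/idP/eqP => [/and3P [A0 /eqP sum_A _] | ->].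
  by rewrite -(set_of_seq_parts A) (sumn_eq0_nil A0 sum_A).
by rewrite parts_set_of_seq.
Qed.

Lemma b_double_sum m : 0 < m -> b m.*2 + 1 = \sum_(r < m.+1) b r.
Proof. by move=> m_gt0; rewrite -(doubleK m) -b_rec ?odd_double ?double_gt0 ?doubleK. Qed.

Lemma b_double_succ_sum m : b m.*2.+1 = \sum_(r < m.+1) b r.
Proof. by rewrite -[in RHS](half_bit_double m true) -b_rec //= odd_double addn0. Qed.

Lemma b1 : b 1 = 1.
Proof. by rewrite (b_double_succ_sum 0) big_ord1 b0. Qed.

Lemma b_doubleS m : b m.+1.*2 + 1 = b m.*2.+1 + b m.+1.
Proof. by rewrite b_double_sum // big_ord_recr b_double_succ_sum. Qed.

Lemma b_double_succ m : 0 < m -> b m.*2.+1 = b m.*2 + 1.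
Proof. by move=> m_gt0; rewrite b_double_succ_sum b_double_sum. Qed.

Lemma b_gt0 n : 0 < b n.
Proof.
case: n => [|n]; first by rewrite b0.
apply/card_gt0P; exists (set_of_seq n.+1 [:: n.+1]).
by rewrite inE nsd_partitionE parts_set_of_seq //= ?ltnSn // /nsd_seq /= addn0 eqxx.
Qed.

Lemma b_leS n : b n <= b n.+1.
Proof.
rewrite -[n](odd_double_half n); case: (odd n) => /=.
  by rewrite add1n -doubleS -(leq_add2r 1) b_doubleS leq_add2l b_gt0.
rewrite add0n; have [-> | h_gt0] := posnP n./2; first by rewrite b0 b1.
by rewrite b_double_succ ?leq_addr.
Qed.

Lemma b_le_half n : 0 < n -> b n <= n./2.+1 * b n./2.
Proof.
move=> n_gt0; apply: leq_trans (leq_addr (~~ odd n) _) _.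
rewrite b_rec // -[X in X * _](card_ord n./2.+1) -sum_nat_const.
by apply: leq_sum => r _; apply: (homo_leq leqnn leq_trans b_leS); rewrite -ltnS.
Qed.

Local Open Scope R_scope.

Lemma pow_ge_binomial d h :
  0 <= d -> 1 + INR h * d + INR h * (INR h - 1) / 2 * d ^ 2 <= (1 + d) ^ h.
Proof.
move=> d_ge0; elim: h => [|h IH]; first by rewrite /=; lra.
have h_ge0 := pos_INR h.
have hh_ge0 : 0 <= INR h * (INR h - 1) * d ^ 3.
  apply: Rmult_le_pos; last exact: pow_le.
  by case: h {IH h_ge0} => [|h]; rewrite ?S_INR /=; [lra | have := pos_INR h; nra].
have := Rmult_le_compat_l (1 + d) _ _ ltac:(lra) IH.
rewrite S_INR /= in hh_ge0 *; nra.
Qed.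

Lemma pow_ge_succ K : 1 < K -> exists H, forall h, (H <= h)%N -> INR h + 1 <= K ^ h.
Proof.
move=> K_gt1; pose d := K - 1.
have [H H_gt] := INR_archimed (d ^ 2) 2 ltac:(rewrite /d; nra).
have d_ge0 : 0 <= d by rewrite /d; lra.
exists H.+1 => h H_le.
have -> : K = 1 + d by rewrite /d; lra.
apply: Rle_trans (pow_ge_binomial h d_ge0).
have : INR H.+1 <= INR h by apply/le_INR/leP.
rewrite S_INR => le_h.
have : INR H * d ^ 2 <= (INR h - 1) * d ^ 2 by apply: Rmult_le_compat_r; nra.
move=> le_hd; have h_ge0 := pos_INR h.
have : INR h * 2 <= INR h * ((INR h - 1) * d ^ 2) by apply: Rmult_le_compat_l; lra.
have : 0 <= INR h * d by apply: Rmult_le_pos.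
lra.
Qed.

Lemma b_le_geom K : 1 < K -> exists C, forall n, INR (b n) <= C * K ^ n.
Proof.
move=> K_gt1; have [H H_ge] := pow_ge_succ K_gt1.
exists (INR (b (2 * H + 1))); elim/ltn_ind => n IH.
have b_mono : {homo b : m n / (m <= n)%N} := homo_leq leqnn leq_trans b_leS.
have [n_le | n_gt] := leqP n (2 * H + 1).
  have : INR (b n) <= INR (b (2 * H + 1)) by apply/le_INR/leP/b_mono.
  have := pow_R1_Rle K n ltac:(lra); have := pos_INR (b n); nra.
pose h := n./2.
have h_ge : (H <= h)%N by rewrite /h; lia.
have h_lt : (h < n)%N by rewrite /h; lia.
have hh_le : (h + h <= n)%N by rewrite /h; lia.
have : INR (b n) <= (INR h + 1) * INR (b h).
  by rewrite -S_INR -mult_INR; apply/le_INR/leP/b_le_half; lia.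
have h1_ge0 : 0 <= INR h + 1 by have := pos_INR h; lra.
have := Rmult_le_compat _ _ _ _ h1_ge0 (pos_INR (b h)) (H_ge h h_ge) (IH h h_lt).
have := Rle_pow K _ _ ltac:(lra) (ssrnat.leP hh_le).
have := pos_INR (b (2 * H + 1)); rewrite pow_add; nra.
Qed.

Lemma ex_series_bterm x : Rabs x < 1 -> ex_series (bterm x).
Proof.
move=> x_lt1; pose K := 2 / (1 + Rabs x); have x_ge0 := Rabs_pos x.
have K_gt1 : 1 < K.
  by rewrite /K; apply: (Rmult_lt_reg_r (1 + Rabs x)); [lra | field_simplify; lra].
have Kx_lt1 : K * Rabs x < 1.
  by rewrite /K; apply: (Rmult_lt_reg_r (1 + Rabs x)); [lra | field_simplify; lra].
have [C b_le] := b_le_geom K_gt1.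
apply: (ex_series_le _ (fun n => C * (K * Rabs x) ^ n)).
  move=> n; rewrite /norm /= /abs /= /bterm Rabs_mult -RPow_abs Rpow_mult_distr -Rmult_assoc.
  rewrite Rabs_right; last exact/Rle_ge/pos_INR.
  by apply: Rmult_le_compat_r; [apply: pow_le | apply: b_le].
apply: (ex_series_ext (fun n => scal C ((K * Rabs x) ^ n))) => //.
by apply/ex_series_scal_l/ex_series_geom; rewrite Rabs_right; nra.
Qed.

Lemma is_pseries_b x : Rabs x < 1 -> is_pseries (fun n => INR (b n)) x (B x).
Proof.
move=> x_lt1; apply: is_series_ext (Series_correct _ (ex_series_bterm x_lt1)) => n.
by rewrite /bterm pow_n_pow /scal /= /mult /= Rmult_comm.
Qed.

Lemma is_pseries_geom y : Rabs y < 1 -> is_pseries (fun _ => 1) y (/ (1 - y)).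
Proof.
move=> y_lt1; apply: is_series_ext (is_series_geom y y_lt1) => n.
by rewrite pow_n_pow /scal /= /mult /= Rmult_1_r.
Qed.

Definition Bexcess (x : R) : R := B x - / (1 - x).

Lemma is_pseries_Bexcess x :
  Rabs x < 1 -> is_pseries (fun n => INR (b n) - 1) x (Bexcess x).
Proof.
by move=> x_lt1; apply: is_pseries_minus (is_pseries_b x_lt1) (is_pseries_geom x_lt1).
Qed.

Lemma Rabs_pow_le x n : Rabs x <= 1 -> (0 < n)%N -> Rabs (x ^ n) <= Rabs x.
Proof.
move=> x_le1; case: n => // n _; rewrite -RPow_abs /=.
have := pow_incr (Rabs x) 1 n (conj (Rabs_pos x) x_le1); rewrite pow1.
have := Rabs_pos x; nra.
Qed.

Lemma Rabs_pow_lt1 x n : Rabs x < 1 -> (0 < n)%N -> Rabs (x ^ n) < 1.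
Proof. by move=> x_lt1 n_gt0; have := @Rabs_pow_le x n ltac:(lra) n_gt0; lra. Qed.

Lemma one_minus_neq0 x : Rabs x < 1 -> 1 - x <> 0.
Proof. by move/Rabs_def2; lra. Qed.

Lemma Bexcess_sqr x : Rabs x < 1 ->
  Bexcess x = Bexcess (x ^ 2) / (1 - x) + x ^ 3 / ((1 - x) * (1 - x ^ 2)).
Proof.
move=> x_lt1; have x2_lt1 : Rabs (x ^ 2) < 1 by apply: Rabs_pow_lt1.
pose c n := INR (b n) - 1.
have lhs : is_pseries (PS_minus c (PS_incr_1 c)) x (Bexcess x - x * Bexcess x).
  exact (is_pseries_minus _ _ _ _ _ (is_pseries_Bexcess x_lt1)
                          (is_pseries_incr_1 _ _ _ (is_pseries_Bexcess x_lt1))).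
have rhs : is_pseries (PS_minus c (PS_incr_1 c)) x
             (Bexcess (x ^ 2) + x * (x ^ 2 / (1 - x ^ 2))).
  apply: is_pseries_odd_even.
    apply: is_pseries_ext (is_pseries_Bexcess x2_lt1) => [[|m]].
      by rewrite /PS_minus /= opp_zero plus_zero_r.
    rewrite (_ : (2 * m.+1)%coq_nat = m.*2.+2); last by lia.
    rewrite /PS_minus /plus /opp /= /c.
    have := f_equal INR (b_doubleS m); rewrite !plus_INR doubleS /=; lra.
  apply: is_pseries_ext (is_pseries_incr_1 _ _ _ (is_pseries_geom x2_lt1)) => [[|m]].
    by rewrite /PS_minus /plus /opp /= /c b0 b1 /= (_ : zero = 0) //; lra.
  rewrite (_ : ((2 * m.+1)%coq_nat + 1)%coq_nat = m.+1.*2.+1); last by lia.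
  rewrite /PS_minus /plus /opp /= /c.
  have := f_equal INR (b_double_succ (ltn0Sn m)); rewrite plus_INR /=; lra.
have := is_pseries_unique _ _ _ lhs; rewrite (is_pseries_unique _ _ _ rhs) => eq_lr.
have := one_minus_neq0 x_lt1; have := one_minus_neq0 x2_lt1.
move=> ne2 ne1; have -> : Bexcess x = (Bexcess x - x * Bexcess x) / (1 - x) by field.
by rewrite -eq_lr; field.
Qed.

Lemma B_sqr x : Rabs x < 1 -> B x = / (1 - x) * B (x ^ 2) - x ^ 2 / (1 - x ^ 2).
Proof.
move=> x_lt1; have x2_lt1 : Rabs (x ^ 2) < 1 by apply: Rabs_pow_lt1.
have := Bexcess_sqr x_lt1; rewrite /Bexcess => eq_B.
have := one_minus_neq0 x_lt1; have := one_minus_neq0 x2_lt1 => ne2 ne1.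
have -> : B x = B x - / (1 - x) + / (1 - x) by ring.
by rewrite eq_B; field.
Qed.

Lemma foldr_Rmult_init (s : seq R) c : foldr Rmult c s = foldr Rmult 1 s * c.
Proof. by elim: s => /= [|y s ->]; ring. Qed.

Lemma prodB0 x : prodB x 0 = 1 - x.
Proof. by rewrite /prodB /=; ring. Qed.

Lemma prodBS x n : prodB x n.+1 = prodB x n * (1 - x ^ (2 ^ n.+1)).
Proof.
rewrite /prodB -(addn1 n.+1) iotaD map_cat foldr_cat foldr_Rmult_init; congr (_ * _).
by rewrite /= add0n Rmult_1_r.
Qed.

Lemma prodB_ge x n : Rabs x < 1 -> (1 - Rabs x) ^ n.+1 <= Rabs (prodB x n).
Proof.
move=> x_lt1.
have factor_ge k : 1 - Rabs x <= Rabs (1 - x ^ (2 ^ k)).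
  have := Rabs_triang_inv 1 (x ^ (2 ^ k)); rewrite Rabs_R1.
  have := @Rabs_pow_le x (2 ^ k) ltac:(lra) (expn_gt0 2 k); lra.
elim: n => [|n IH]; first by have := factor_ge 0%N; rewrite prodB0 /= Rmult_1_r; lra.
have a_le1 : 0 <= 1 - Rabs x by lra.
have := Rmult_le_compat _ _ _ _ (pow_le _ n.+1 a_le1) a_le1 IH (factor_ge n.+1).
by rewrite prodBS Rabs_mult /=; lra.
Qed.

Lemma prodB_neq0 x n : Rabs x < 1 -> prodB x n <> 0.
Proof.
move=> x_lt1 P0; have := prodB_ge n x_lt1; rewrite P0 Rabs_R0.
by have := pow_lt (1 - Rabs x) n.+1 ltac:(lra); lra.
Qed.

Lemma Bexcess_iter x N : Rabs x < 1 -> Bexcess x =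
  sum_n (fun i => x ^ (3 * 2 ^ i) / prodB x i.+1) N + Bexcess (x ^ (2 ^ N.+1)) / prodB x N.
Proof.
move=> x_lt1; elim: N => [|N IH].
  by rewrite sum_O prodBS prodB0 (Bexcess_sqr x_lt1) /=; ring.
set y := x ^ (2 ^ N.+1).
have y_lt1 : Rabs y < 1 := Rabs_pow_lt1 x_lt1 (expn_gt0 2 N.+1).
have y2_lt1 : Rabs (y ^ 2) < 1 by apply: Rabs_pow_lt1.
have y2E : y ^ 2 = x ^ (2 ^ N.+2) by rewrite /y -pow_mult (expnS 2 N.+1); congr (_ ^ _); lia.
have y3E : y ^ 3 = x ^ (3 * 2 ^ N.+1) by rewrite /y -pow_mult; congr (_ ^ _); lia.
have := @prodB_neq0 x N x_lt1; have := one_minus_neq0 y_lt1; have := one_minus_neq0 y2_lt1.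
move=> ne2 ne1 neP; rewrite {1}IH (Bexcess_sqr y_lt1) sum_Sn !prodBS -/y -y2E -y3E /plus /=.
by rewrite /= Rmult_1_r in ne2; field.
Qed.

Lemma PSeries_abs_le (a : nat -> R) y r : (forall n, 0 <= a n) -> Rabs y <= r ->
  ex_pseries a r -> Rabs (PSeries a y) <= PSeries a r.
Proof.
move=> a_ge0 y_le /ex_pseries_R ex_r.
have term_le n : Rabs (a n * y ^ n) <= a n * r ^ n.
  rewrite Rabs_mult Rabs_right -?RPow_abs; last exact/Rle_ge.
  by apply/Rmult_le_compat_l/pow_incr => //; split; [exact: Rabs_pos | lra].
have ex_y : ex_series (fun n => Rabs (a n * y ^ n)).
  by apply: ex_series_le ex_r => n; rewrite /norm /= /abs /= Rabs_Rabsolu.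
rewrite /PSeries; apply: Rle_trans (Series_Rabs _ ex_y) _.
by apply: Series_le ex_r => n; split; [exact: Rabs_pos | exact: term_le].
Qed.

Lemma Bexcess_le x y : Rabs x < 1 -> Rabs y <= Rabs x ->
  Rabs (Bexcess y) <= Rabs y * PSeries (PS_decr_1 (fun n => INR (b n) - 1)) (Rabs x).
Proof.
move=> x_lt1 y_le; pose c n := INR (b n) - 1.
have c_ge0 n : 0 <= c n by have /= := le_INR _ _ (ssrnat.leP (b_gt0 n)); rewrite /c; lra.
have y_lt1 : Rabs y < 1 by lra.
have ax_lt1 : Rabs (Rabs x) < 1 by rewrite Rabs_Rabsolu.
rewrite -(is_pseries_unique _ _ _ (is_pseries_Bexcess y_lt1)).
rewrite PSeries_decr_1; last by exists (Bexcess y); apply: is_pseries_Bexcess.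
rewrite b0 /= Rminus_eq_0 Rplus_0_l Rabs_mult.
apply/Rmult_le_compat_l/PSeries_abs_le => //; [exact: Rabs_pos | exact: (fun n => c_ge0 n.+1) |].
have unit_or_0 : Rabs x = zero \/ exists w : R, mult w (Rabs x) = Hierarchy.one.
  have [-> | x_neq0] := Req_dec (Rabs x) 0; [by left | right].
  by exists (/ Rabs x); rewrite /mult /= Rinv_l.
apply: (ex_pseries_decr_1 _ _ unit_or_0).
by exists (Bexcess (Rabs x)); apply: is_pseries_Bexcess.
Qed.

Lemma is_lim_seq_pow_pow2_div a c :
  Rabs a < 1 -> 0 < c -> is_lim_seq (fun n => a ^ (2 ^ n) / c ^ n) 0.
Proof.
move=> a_lt1 c_gt0; have [-> | a_neq0] := Req_dec a 0.
  apply: is_lim_seq_ext (is_lim_seq_const 0) => n.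
  by rewrite pow_i ?Rdiv_0_l //; apply/ltP/expn_gt0.
pose t n := a ^ (2 ^ n) / c ^ n.
have t_neq0 n : t n <> 0.
  by apply: Rmult_integral_contrapositive_currified;
     [apply: pow_nonzero | apply/Rinv_neq_0_compat/pow_nonzero]; lra.
have pow2_lim : is_lim_seq (fun n => Rabs a ^ (2 ^ n)) 0.
  apply: (is_lim_seq_subseq (fun n => Rabs a ^ n)).
    by apply: eventually_subseq => n; apply/ltP; rewrite ltn_exp2l.
  by apply: is_lim_seq_geom; rewrite Rabs_Rabsolu.
have ratio_lim : is_lim_seq (fun n => Rabs (t n.+1 / t n)) 0.
  have := is_lim_seq_scal_r _ (/ c) _ pow2_lim; rewrite /= Rmult_0_l.
  apply: is_lim_seq_ext => n.
  have pow_neq0 : a ^ (2 ^ n) <> 0 by apply: pow_nonzero.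
  have -> : t n.+1 / t n = a ^ (2 ^ n) / c.
    rewrite /t expnS mul2n -addnn pow_add /=; field.
    by split; [lra | split => //; apply: pow_nonzero; lra].
  by rewrite Rabs_div ?RPow_abs ?(Rabs_right c) //; lra.
apply/is_lim_seq_abs_0/ex_series_lim_0.
exact: ex_series_DAlembert Rlt_0_1 t_neq0 ratio_lim.
Qed.

Lemma is_series_Bexcess x : Rabs x < 1 ->
  is_series (fun i => x ^ (3 * 2 ^ i) / prodB x i.+1) (Bexcess x).
Proof.
move=> x_lt1; pose a := Rabs x; have a_ge0 : 0 <= a := Rabs_pos x; have a_lt : a < 1 := x_lt1.
pose M := PSeries (PS_decr_1 (fun n => INR (b n) - 1)) a.
have rem_le N : Rabs (Bexcess (x ^ (2 ^ N.+1)) / prodB x N) <=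
                M * (a ^ (2 ^ N.+1) / (1 - a) ^ N.+1).
  have y_le : Rabs (x ^ (2 ^ N.+1)) <= a by apply: Rabs_pow_le; [lra | exact: expn_gt0].
  have B_le := Bexcess_le x_lt1 y_le; rewrite -/M -RPow_abs -/a in B_le.
  have P_ge := prodB_ge N x_lt1; have Pa_gt0 := pow_lt (1 - a) N.+1 ltac:(lra).
  rewrite Rabs_div; last exact: prodB_neq0.
  have := Rmult_le_compat_l _ _ _ (Rabs_pos (Bexcess (x ^ (2 ^ N.+1))))
            (Rinv_le_contravar _ _ Pa_gt0 P_ge).
  have := Rmult_le_compat_r _ _ _ (Rlt_le _ _ (Rinv_0_lt_compat _ Pa_gt0)) B_le.
  rewrite /Rdiv; lra.
have rem_lim : is_lim_seq (fun N => Bexcess (x ^ (2 ^ N.+1)) / prodB x N) 0.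
  apply/is_lim_seq_abs_0/(is_lim_seq_le_le (fun _ => 0) _ _ _ _ (is_lim_seq_const 0)).
    by move=> N; split; [exact: Rabs_pos | exact: rem_le].
  have a_lt1 : Rabs a < 1 by rewrite Rabs_Rabsolu.
  have := is_lim_seq_pow_pow2_div a_lt1 (ltac:(lra) : 0 < 1 - a).
  move=> /is_lim_seq_incr_1 /(is_lim_seq_scal_l _ M); rewrite /= Rmult_0_r; apply.
have := is_lim_seq_minus' _ _ _ _ (is_lim_seq_const (Bexcess x)) rem_lim.
rewrite Rminus_0_r; apply: is_lim_seq_ext => N.
by rewrite {1}(Bexcess_iter N x_lt1) /Rminus Rplus_assoc Rplus_opp_r Rplus_0_r.
Qed.

Theorem theorem2 :
  b 0 = 1%N /\ b 1 = 1%N /\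
  (forall m : nat, (1 <= m)%N ->
     (b (2 * m) + 1 = b (2 * m - 1) + b m)%N /\
     b (2 * m + 1)%N = (b (2 * m) + 1)%N) /\
  (forall x : R, Rabs x < 1 ->
     ex_series (bterm x) /\
     B x = / (1 - x) * B (x ^ 2) - x ^ 2 / (1 - x ^ 2) /\
     is_series (fun i : nat => x ^ (3 * 2 ^ i)%N / prodB x i.+1)
               (B x - 1 - x / (1 - x))).
Proof.
split; first exact: b0.
split; first exact: b1.
split=> [[|m] // _ | x x_lt1].
  rewrite !mul2n (_ : m.+1.*2 - 1 = m.*2.+1)%N; last by lia.
  by split; [exact: b_doubleS | rewrite addn1 b_double_succ].
split; first exact: ex_series_bterm.
split; first exact: B_sqr.
have -> : B x - 1 - x / (1 - x) = Bexcess x.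
  by rewrite /Bexcess; have := one_minus_neq0 x_lt1 => ne; field.
exact: is_series_Bexcess.
Qed.
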